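(* Let $n_x, d \in \mathbb{Z}^+$, let $\mathsf{X} \in \mathbb{R}^{n_x \times d}$ be arbitrary and let $\gamma_1, \ldots, \gamma_d > 0$. Let $\tilde{\mathsf{K}}_\nabla$ be the $n_x(d+1) \times n_x(d+1)$ modified gradient-enhanced Gaussian kernel matrix defined in the context. Then for every row index $a \in \{1, \ldots, n_x\}$, the sum of the absolute values of the off-diagonal entries of row $a$ of $\tilde{\mathsf{K}}_\nabla$ is at most $$u_{\text{G}}(n_x,d) = (n_x-1) \frac{1 + \sqrt{1 + 4d}}{2} e^{-\frac{1 + 2d - \sqrt{1 + 4d}}{4d}}.$$
   Context: Write $\tilde{x}_{ij} = \gamma_j x_{ij}$ for $1 \le i \le n_x$, $1 \le j \le d$, where $x_{ij}$ is the $(i,j)$ entry of $\mathsf{X}$, and let $\tilde{\mathbf{x}}_{i:} \in \mathbb{R}^d$ be the vector $(\tilde{x}_{i1},\ldots,\tilde{x}_{id})$. Define the $n_x\times n_x$ matrices $\mathsf{K}$ and $\tilde{\mathsf{R}}_j$ ($1\le j\le d$) by $\mathsf{K}_{ab} = \exp\!\left(-\tfrac12 \|\tilde{\mathbf{x}}_{a:} - \tilde{\mathbf{x}}_{b:}\|_2^2\right)$ and $(\tilde{\mathsf{R}}_j)_{ab} = \tilde{x}_{aj} - \tilde{x}_{bj}$. The matrix $\tilde{\mathsf{K}}_\nabla$ is the symmetric block matrix with $(d+1)\times(d+1)$ blocks of size $n_x \times n_x$, indexed by $0,1,\ldots,d$, whose blocks are: block $(0,0)$ is $\mathsf{K}$;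 block $(0,j)$ has entries $(\tilde{\mathsf{R}}_j)_{ab}\mathsf{K}_{ab}$; block $(i,0)$ has entries $-(\tilde{\mathsf{R}}_i)_{ab}\mathsf{K}_{ab}$; block $(i,j)$ for $i,j \ge 1$ has entries $\left(\delta_{ij} - (\tilde{\mathsf{R}}_i)_{ab}(\tilde{\mathsf{R}}_j)_{ab}\right)\mathsf{K}_{ab}$, where $\delta_{ij}$ is the Kronecker delta. (Equivalently, $\tilde{\mathsf{K}}_\nabla = \mathsf{P}^{-1}\mathsf{K}_\nabla\mathsf{P}^{-1}$ where $\mathsf{K}_\nabla$ is the gradient-enhanced Gaussian kernel matrix with kernel $k(\mathbf{x},\mathbf{y}) = e^{-\frac12\sum_i \gamma_i^2(x_i-y_i)^2}$ and $\mathsf{P} = \mathrm{diag}(\mathbf{1}_{n_x}, \gamma_1\mathbf{1}_{n_x},\ldots,\gamma_d\mathbf{1}_{n_x})$.) Rows $1,\ldots,n_x$ are the rows of block-row $0$. *)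

From mathcomp Require Import all_boot all_order all_algebra.
From mathcomp Require Import all_classical all_reals all_analysis.
Set Implicit Arguments. Unset Strict Implicit. Unset Printing Implicit Defensive.
Import Order.TTheory GRing.Theory Num.Theory.
Local Open Scope ring_scope.

(* Block indices of the gradient-enhanced matrix: 'I_(d.+1); block 0 is the
   function-value block, block j.+1 (j : 'I_d) is the derivative block for
   coordinate j (the paper's j+1).  A row/column of Ktilde is a pair
   (block index, point index) : 'I_(d.+1) * 'I_nx. *)

Section GEK.
Variables (R : realType) (nx d : nat) (X : 'M[R]_(nx, d)) (gamma : 'I_d -> R).

Definition xt (a : 'I_nx) (j : 'I_d) : R := gamma j * X a j.

Definition Kmat (a b : 'I_nx) : R :=
  expR (- (1/2) * \sum_(j < d) (xt a j - xt b j) ^+ 2).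

Definition Rt (j : 'I_d) (a b : 'I_nx) : R := xt a j - xt b j.

Definition Ktilde (p q : 'I_(d.+1) * 'I_nx) : R :=
  let: (i, a) := p in let: (j, b) := q in
  match @fintype.split 1 d i, @fintype.split 1 d j with
  | inl _, inl _ => Kmat a b
  | inl _, inr j' => Rt j' a b * Kmat a b
  | inr i', inl _ => - (Rt i' a b * Kmat a b)
  | inr i', inr j' =>
      ((i' == j')%:R - Rt i' a b * Rt j' a b) * Kmat a b
  end.

End GEK.

Definition uG (R : realType) (nx d : nat) : R :=
  (nx%:R - 1) * ((1 + Num.sqrt (1 + 4 * d%:R)) / 2)
  * expR (- ((1 + 2 * d%:R - Num.sqrt (1 + 4 * d%:R)) / (4 * d%:R))).

From mathcomp Require Import all_boot all_order all_algebra.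
From mathcomp Require Import all_classical all_reals all_analysis.
From mathcomp Require Import ring lra.
Import Order.TTheory GRing.Theory Num.Theory.
Local Open Scope ring_scope.

(* In row [(0, a)], the block column [b] holds [K_ab] followed by the entries
   [r_j K_ab], where [r = x~_a - x~_b]; for [b = a] only the diagonal entry is
   nonzero.  The off-diagonal sum is therefore
   [sum_{b <> a} (1 + sum_j |r_j|) exp (- |r|^2 / 2)].  With [M = uG_peak d]
   and [c = uG_decay d], AM-GM gives [|r_j| <= M r_j^2 / 2 + 1 / (2 M)], and
   [M] is chosen so that the resulting bound [M (1 - c + |r|^2 / 2)] combines
   with [1 + x <= e^x] into [M e^{-c}], independently of [r]. *)

Lemma ler_norm_AMGM (R : realFieldType) (M t : R) :
  0 < M -> `|t| <= M / 2 * t ^+ 2 + (2 * M)^-1.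
Proof.
move=> M_gt0; rewrite -subr_ge0.
have -> : M / 2 * t ^+ 2 + (2 * M)^-1 - `|t| = (M * `|t| - 1) ^+ 2 / (2 * M).
  by rewrite -[t ^+ 2]real_normK ?num_real //; field; apply/eqP; lra.
by rewrite divr_ge0 ?sqr_ge0 // mulr_ge0 // ltW.
Qed.

Lemma sum_norm_le_AMGM (R : realFieldType) (d : nat) (M : R) (r : 'I_d -> R) :
  0 < M ->
  \sum_(j < d) `|r j| <= M / 2 * \sum_(j < d) r j ^+ 2 + d%:R / (2 * M).
Proof.
move=> M_gt0.
have -> : d%:R / (2 * M) = \sum_(j < d) (2 * M)^-1.
  by rewrite sumr_const card_ord mulr_natl.
rewrite mulr_sumr -big_split /=.
by apply: ler_sum => j _; exact: ler_norm_AMGM.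
Qed.

Lemma expR_shift_le (R : realType) (x c : R) :
  (1 + x - c) * expR (- x) <= expR (- c).
Proof.
have -> : expR (- c) = expR (x - c) * expR (- x) by rewrite -expRD; congr expR; ring.
by rewrite ler_pM2r ?expR_gt0 // -addrA expR_ge1Dx.
Qed.

(* [uG_peak d] and [uG_decay d] are the values of [1 + d t] and [d t^2 / 2]
   at the maximiser [t = (sqrt (1 + 4 d) - 1) / (2 d)] of [(1 + d t) e^{-d t^2 / 2}]. *)
Definition uG_peak (R : realType) (d : nat) : R := (1 + Num.sqrt (1 + 4 * d%:R)) / 2.

Definition uG_decay (R : realType) (d : nat) : R :=
  (1 + 2 * d%:R - Num.sqrt (1 + 4 * d%:R)) / (4 * d%:R).

Lemma uGE (R : realType) (nx d : nat) :
  uG R nx d = (nx%:R - 1) * (uG_peak R d * expR (- uG_decay R d)).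
Proof. by rewrite [RHS]mulrA. Qed.

Lemma uG_peak_gt0 (R : realType) (d : nat) : 0 < uG_peak R d.
Proof. by rewrite /uG_peak; have := sqrtr_ge0 (1 + 4 * d%:R : R) => ?; lra. Qed.

Lemma uG_peak_sqr (R : realType) (d : nat) :
  uG_peak R d ^+ 2 = uG_peak R d + d%:R.
Proof.
rewrite /uG_peak; set w := Num.sqrt _.
have w2 : w ^+ 2 = 1 + 4 * d%:R.
  by rewrite sqr_sqrtr // addr_ge0 // mulr_ge0 // ler0n.
rewrite !expr2 in w2 *; lra.
Qed.

Lemma uG_peak_decay (R : realType) (d : nat) : (0 < d)%N ->
  uG_peak R d * (1 - uG_decay R d) = 1 + d%:R / (2 * uG_peak R d).
Proof.
move=> d_gt0; set M := uG_peak R d.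
have d_neq0 : (d%:R : R) != 0 by rewrite pnatr_eq0 -lt0n.
have M_neq0 : M != 0 by rewrite gt_eqF // uG_peak_gt0.
have decayE : uG_decay R d = (1 + d%:R - M) / (2 * d%:R).
  by rewrite /uG_decay /M /uG_peak; field.
have M2 := uG_peak_sqr R d; rewrite -/M in M2.
have dE : d%:R = M ^+ 2 - M by rewrite M2; ring.
by rewrite decayE dE; field; rewrite -dE d_neq0 M_neq0.
Qed.

Lemma one_add_sum_norm_gauss_le (R : realType) (d : nat) (r : 'I_d -> R) : (0 < d)%N ->
  (1 + \sum_(j < d) `|r j|) * expR (- (1/2) * \sum_(j < d) r j ^+ 2)
    <= uG_peak R d * expR (- uG_decay R d).
Proof.
move=> d_gt0; set s := \sum_(j < d) r j ^+ 2.
have M_gt0 := uG_peak_gt0 R d.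
have sum_le : 1 + \sum_(j < d) `|r j| <= uG_peak R d * (1 + s / 2 - uG_decay R d).
  have -> : uG_peak R d * (1 + s / 2 - uG_decay R d)
      = uG_peak R d * (1 - uG_decay R d) + uG_peak R d / 2 * s by ring.
  rewrite uG_peak_decay // -addrA lerD2l addrC.
  exact: sum_norm_le_AMGM.
apply: le_trans (ler_wpM2r (ltW (expR_gt0 _)) sum_le) _.
rewrite -mulrA ler_pM2l //.
have -> : - (1/2) * s = - (s / 2) by ring.
exact: expR_shift_le.
Qed.

Lemma split1_ord0 (d : nat) : @fintype.split 1 d (ord0 : 'I_d.+1) = inl ord0.
Proof. by rewrite split1 unlift_none. Qed.

Lemma split1_lift (d : nat) (j : 'I_d) :
  @fintype.split 1 d (lift ord0 j : 'I_d.+1) = inr j.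
Proof. by rewrite split1 liftK. Qed.

Section KtildeRow.
Variables (R : realType) (nx d : nat) (X : 'M[R]_(nx, d)) (gamma : 'I_d -> R).

Lemma Rt_diag (j : 'I_d) (a : 'I_nx) : Rt X gamma j a a = 0.
Proof. exact: subrr. Qed.

Lemma Kmat_ge0 (a b : 'I_nx) : 0 <= Kmat X gamma a b.
Proof. exact: expR_ge0. Qed.

Lemma Ktilde_row0_block_sum (a b : 'I_nx) :
  \sum_(i < d.+1) `|Ktilde X gamma (ord0, a) (i, b)|
    = (1 + \sum_(j < d) `|Rt X gamma j a b|) * Kmat X gamma a b.
Proof.
rewrite big_ord_recl /Ktilde split1_ord0 mulrDl mul1r mulr_suml.
under eq_bigr => j _ do rewrite split1_lift normrM (ger0_norm (Kmat_ge0 a b)).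
by rewrite ger0_norm ?Kmat_ge0.
Qed.

Lemma Ktilde_row0_offdiag_sum (a : 'I_nx) :
  \sum_(q : 'I_(d.+1) * 'I_nx | q != (ord0, a)) `|Ktilde X gamma (ord0, a) q|
    = \sum_(b | b != a) (1 + \sum_(j < d) `|Rt X gamma j a b|) * Kmat X gamma a b.
Proof.
pose F q := `|Ktilde X gamma (ord0, a) q|.
have by_entries : \sum_q F q = F (ord0, a) + \sum_(q | q != (ord0, a)) F q.
  by rewrite (bigD1 (ord0, a)).
have by_blocks :
    \sum_q F q = \sum_b (1 + \sum_(j < d) `|Rt X gamma j a b|) * Kmat X gamma a b.
  rewrite -(eq_bigr _ (fun b _ => Ktilde_row0_block_sum a b)).
  by rewrite exchange_big pair_big; apply: eq_bigr => -[].
have diag_block : (1 + \sum_(j < d) `|Rt X gamma j a a|) * Kmat X gamma a a = F (ord0, a).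
  rewrite big1 => [|j _]; last by rewrite Rt_diag normr0.
  by rewrite addr0 mul1r /F /Ktilde split1_ord0 ger0_norm ?Kmat_ge0.
apply: (addrI (F (ord0, a))).
by rewrite -by_entries by_blocks (bigD1 a) //= diag_block.
Qed.

End KtildeRow.

Theorem proposition1 (R : realType) (nx d : nat) (X : 'M[R]_(nx, d))
    (gamma : 'I_d -> R) :
  (0 < nx)%N -> (0 < d)%N -> (forall j, 0 < gamma j) ->
  forall a : 'I_nx,
    \sum_(q : 'I_(d.+1) * 'I_nx | q != (ord0, a))
        `|Ktilde X gamma (ord0, a) q| <= uG R nx d.
Proof.
move=> nx_gt0 d_gt0 _ a.
rewrite Ktilde_row0_offdiag_sum uGE.
apply: (@le_trans _ _ (\sum_(b | b != a) uG_peak R d * expR (- uG_decay R d))).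
  by apply: ler_sum => b _; exact: one_add_sum_norm_gauss_le.
by rewrite sumr_const cardC1 card_ord -[_ *+ _]mulr_natl -subn1 natrB.
Qed.
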